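(* With $\mathbf{Y}_\mathrm{l},\mathbf{Y}_\mathrm{e}$ as in the context and $g(\mathbf{v})=\frac{\mathbf{v}^H\mathbf{Y}_\mathrm{l}\mathbf{v}}{\mathbf{v}^H\mathbf{Y}_\mathrm{e}\mathbf{v}}$, let $\mathbf{v}^{(t)}\in\mathbb{C}^M$ satisfy $|v^{(t)}_i|=1$ for all $i$, let $$\mathbf{w}^{(t)}=\frac{\mathbf{Y}_\mathrm{l}\mathbf{v}^{(t)}}{(\mathbf{v}^{(t)})^H\mathbf{Y}_\mathrm{e}\mathbf{v}^{(t)}}-\frac{(\mathbf{v}^{(t)})^H\mathbf{Y}_\mathrm{l}\mathbf{v}^{(t)}}{[(\mathbf{v}^{(t)})^H\mathbf{Y}_\mathrm{e}\mathbf{v}^{(t)}]^2}\big[\mathbf{Y}_\mathrm{e}-\lambda_{\max}(\mathbf{Y}_\mathrm{e})\mathbf{I}_M\big]\mathbf{v}^{(t)},$$ and let $\mathbf{v}^{(t+1)}$ be any vector with $|v^{(t+1)}_i|=1$ for all $i$ and $v^{(t+1)}_i=w^{(t)}_i/|w^{(t)}_i|$ whenever $w^{(t)}_i\ne0$. Then $g(\mathbf{v}^{(t+1)})\ge g(\mathbf{v}^{(t)})$.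
   Context: Let $M,N_t\ge1$, $P\ge0$, $\sigma_\mathrm{l}^2,\sigma_\mathrm{e}^2>0$, $\mathbf{R}_\mathrm{l},\mathbf{R}_\mathrm{e}\in\mathbb{C}^{M\times N_t}$, $\mathbf{f}\in\mathbb{C}^{N_t}$, and $\mathbf{Y}_i=\frac1M\mathbf{I}_M+\frac{P}{\sigma_i^2}\mathbf{R}_i\mathbf{f}\mathbf{f}^H\mathbf{R}_i^H$ for $i\in\{\mathrm{l},\mathrm{e}\}$. $\lambda_{\max}$ denotes the largest eigenvalue of a Hermitian matrix. *)

(* Complex scalars: an arbitrary numClosedFieldType C
   (the abstract structure of the complex numbers, with conjugation). *)
From HB Require Import structures.
From mathcomp Require Import all_boot all_order all_algebra.
Set Implicit Arguments. Unset Strict Implicit. Unset Printing Implicit Defensive.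
Import Order.TTheory GRing.Theory Num.Theory.
Local Open Scope ring_scope.

Definition hadj (C : numClosedFieldType) (m n : nat) (A : 'M[C]_(m, n)) : 'M[C]_(n, m) :=
  (map_mx Num.conj A)^T.

Definition Ymat (C : numClosedFieldType) (M Nt : nat) (P sigma2 : C)
  (R : 'M[C]_(M, Nt)) (f : 'cV[C]_Nt) : 'M[C]_M :=
  (M%:R)^-1%:M + (P / sigma2) *: (R *m f *m hadj f *m hadj R).

Definition qform (C : numClosedFieldType) (M : nat) (Y : 'M[C]_M) (v : 'cV[C]_M) : C :=
  (hadj v *m Y *m v) 0 0.

Definition is_lambda_max (C : numClosedFieldType) (M : nat) (Y : 'M[C]_M) (lam : C) : Prop :=
  eigenvalue Y lam /\ (forall b, eigenvalue Y b -> b <= lam).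

Definition gratio (C : numClosedFieldType) (M : nat) (Yl Ye : 'M[C]_M) (v : 'cV[C]_M) : C :=
  qform Yl v / qform Ye v.

Definition wvec (C : numClosedFieldType) (M : nat) (Yl Ye : 'M[C]_M) (lam : C)
  (v : 'cV[C]_M) : 'cV[C]_M :=
  (qform Ye v)^-1 *: (Yl *m v)
  - (qform Yl v / (qform Ye v) ^+ 2) *: ((Ye - lam%:M) *m v).

From HB Require Import structures.
From mathcomp Require Import all_boot all_order all_algebra.
From mathcomp Require Import ring.
Set Implicit Arguments. Unset Strict Implicit. Unset Printing Implicit Defensive.
Import Order.TTheory GRing.Theory Num.Theory.
Local Open Scope ring_scope.

(* Write <x, y> = x^H y, a = <v, A v>, b = <v, B v>, b' = <v', B v'>.  When A
   is positive semidefinite, B <= lam I and <v', v'> = <v, v>, the gap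
   g(v') - g(v) is, by a direct algebraic identity, the sum of three
   nonnegative terms:
     (1) <e, A e> / b'                 with e = v' - (b'/b) v,
     (2) (a/b^2) (lam <d, d> - <d, B d>) with d = v' - v,
     (3) 2 Re <w, v'> - 2 Re <w, v>    with w the MM direction (wvec).
   Term (3) is nonnegative because v' aligns the phase of every entry of w
   (lemma [phase_alignment]).

   The matrices Y_l, Y_e are rank-one updates c I + k u u^H with c > 0 and
   k >= 0; such matrices are Hermitian, positive definite, and, by
   Cauchy-Schwarz, bounded by their largest eigenvalue c + k <u, u>. *)

Section InnerProduct.
Variables (C : numClosedFieldType) (M : nat).
Implicit Types (x y z : 'cV[C]_M) (a : C).

Definition dot x y : C := (hadj x *m y) 0 0.

Lemma dotE x y : dot x y = \sum_i (x i 0)^* * y i 0.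
Proof. by rewrite /dot /hadj !mxE; apply: eq_bigr => i _; rewrite !mxE. Qed.

Lemma qformE (Y : 'M[C]_M) x : qform Y x = dot x (Y *m x).
Proof. by rewrite /qform /dot mulmxA. Qed.

Lemma dotDl x y z : dot (x + y) z = dot x z + dot y z.
Proof. by rewrite !dotE -big_split; apply: eq_bigr => i _; rewrite !mxE rmorphD mulrDl. Qed.

Lemma dotDr x y z : dot z (x + y) = dot z x + dot z y.
Proof. by rewrite !dotE -big_split; apply: eq_bigr => i _; rewrite !mxE mulrDr. Qed.

Lemma dotNl x z : dot (- x) z = - dot x z.
Proof. by rewrite !dotE -sumrN; apply: eq_bigr => i _; rewrite !mxE rmorphN mulNr. Qed.

Lemma dotNr x z : dot z (- x) = - dot z x.
Proof. by rewrite !dotE -sumrN; apply: eq_bigr => i _; rewrite !mxE mulrN. Qed.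

Lemma dotBl x y z : dot (x - y) z = dot x z - dot y z.
Proof. by rewrite dotDl dotNl. Qed.

Lemma dotBr x y z : dot z (x - y) = dot z x - dot z y.
Proof. by rewrite dotDr dotNr. Qed.

Lemma dotZl a x z : dot (a *: x) z = a^* * dot x z.
Proof. by rewrite !dotE mulr_sumr; apply: eq_bigr => i _; rewrite !mxE rmorphM mulrA. Qed.

Lemma dotZr a x z : dot z (a *: x) = a * dot z x.
Proof. by rewrite !dotE mulr_sumr; apply: eq_bigr => i _; rewrite !mxE mulrCA. Qed.

Lemma dot_conj x y : (dot x y)^* = dot y x.
Proof. by rewrite !dotE rmorph_sum; apply: eq_bigr => i _; rewrite rmorphM /= conjCK mulrC. Qed.

Lemma dot0l z : dot 0 z = 0.
Proof. by rewrite dotE big1 // => i _; rewrite mxE rmorph0 mul0r. Qed.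

Lemma dot_ge0 x : 0 <= dot x x.
Proof. by rewrite dotE sumr_ge0 // => i _; rewrite -normCKC exprn_ge0. Qed.

Lemma dot_gt0 x : x != 0 -> 0 < dot x x.
Proof.
move=> nz; rewrite lt_def dot_ge0 andbT; apply: contra nz; rewrite dotE => /eqP Hs.
have Hge (i : 'I_M) : true -> 0 <= (x i 0)^* * x i 0 by rewrite -normCKC exprn_ge0.
have entries_eq0 := psumr_eq0P Hge Hs.
apply/eqP/matrixP => i j; rewrite (ord1 j) mxE; apply/eqP.
by move: (entries_eq0 i isT); rewrite -normCKC => /eqP; rewrite expf_eq0 normr_eq0.
Qed.

Lemma dot_unimodular x : (forall i, `|x i 0| = 1) -> dot x x = M%:R.
Proof.
move=> hx; rewrite dotE (eq_bigr (fun _ => 1)) ?sumr_const ?card_ord //.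
by move=> i _; rewrite -normCKC hx expr1n.
Qed.

Lemma cauchy_schwarz x z : `|dot x z| ^+ 2 <= dot x x * dot z z.
Proof.
rewrite normCK dot_conj.
have [->|nz] := eqVneq x 0; first by rewrite !dot0l !mul0r.
have hx := dot_gt0 nz.
have H := dot_ge0 (dot x x *: z - dot x z *: x).
rewrite dotBl !dotBr !dotZl !dotZr (geC0_conj (ltW hx)) dot_conj in H.
have E : dot x x * (dot x x * dot z z - dot x z * dot z x) =
  dot x x * (dot x x * dot z z) - dot x x * (dot x z * dot z x) -
  (dot z x * (dot x x * dot x z) - dot z x * (dot x z * dot x x)) by ring.
by rewrite -E pmulr_rge0 // subr_ge0 in H.
Qed.

(* Aligning phases: if x1 has unimodular entries equal to the phase of w
   wherever w is nonzero, then Re <w, x1> >= Re <w, x0> for every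
   unimodular x0; twice the real part is written as <w, x> + <x, w>. *)
Lemma phase_alignment (w x0 x1 : 'cV[C]_M) :
  (forall i, `|x0 i 0| = 1) -> (forall i, `|x1 i 0| = 1) ->
  (forall i, w i 0 != 0 -> x1 i 0 = w i 0 / `|w i 0|) ->
  dot w x0 + dot x0 w <= dot w x1 + dot x1 w.
Proof.
move=> h0 h1 hu; rewrite !dotE -!big_split /=; apply: ler_sum => i _.
have [->|nz] := eqVneq (w i 0) 0; first by rewrite rmorph0 !mul0r !mulr0.
have conj_swap (y : C) : y^* * w i 0 = ((w i 0)^* * y)^*.
  by rewrite rmorphM /= conjCK mulrC.
have add_conj_le (y : C) : y + y^* <= `|y| + `|y|.
  have := (leif_Re_Creal y).1; rewrite ReE ler_pdivrMr ?ltr0n // => h.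
  by rewrite -mulr2n -mulr_natr.
have aligned : (w i 0)^* * x1 i 0 = `|(w i 0)^* * x0 i 0|.
  rewrite (hu i nz) normrM h0 mulr1 norm_conjC mulrA -normCKC expr2.
  by rewrite mulfK ?normr_eq0.
by rewrite !conj_swap aligned (geC0_conj (normr_ge0 _)).
Qed.
End InnerProduct.

Section RankOneUpdate.
Variables (C : numClosedFieldType) (M : nat).
Variables (c k : C) (u : 'cV[C]_M).
Hypotheses (hc : 0 < c) (hk : 0 <= k).
Implicit Types (x y : 'cV[C]_M).

Definition rank1 : 'M[C]_M := c%:M + k *: (u *m hadj u).

Lemma rank1_mul x : rank1 *m x = c *: x + (k * dot u x) *: u.
Proof.
rewrite mulmxDl mul_scalar_mx -scalemxAl -mulmxA [hadj u *m x]mx11_scalar.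
by rewrite mul_mx_scalar scalerA.
Qed.

Lemma rank1_form x : dot x (rank1 *m x) = c * dot x x + k * `|dot u x| ^+ 2.
Proof. by rewrite rank1_mul dotDr !dotZr normCK dot_conj mulrA [_ * dot x u]mulrC. Qed.

Lemma rank1_hermitian x y : dot (rank1 *m x) y = dot x (rank1 *m y).
Proof.
rewrite !rank1_mul dotDl dotDr !dotZl !dotZr rmorphM /= dot_conj.
by rewrite !geC0_conj ?(ltW hc) // mulrAC.
Qed.

Lemma rank1_form_ge x : c * dot x x <= dot x (rank1 *m x).
Proof. by rewrite rank1_form lerDl mulr_ge0 ?exprn_ge0. Qed.

Lemma rank1_psd x : 0 <= dot x (rank1 *m x).
Proof. exact: le_trans (mulr_ge0 (ltW hc) (dot_ge0 x)) (rank1_form_ge x). Qed.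

(* u^H is a left eigenvector for c + k <u, u>; if u = 0 any nonzero
   row vector is. *)
Lemma rank1_eigenvalue : (0 < M)%N -> eigenvalue rank1 (c + k * dot u u).
Proof.
move=> hM; apply/eigenvalueP; rewrite /rank1; have [->|nz] := eqVneq u 0.
  exists (const_mx 1 : 'rV[C]_M).
    by rewrite dot0l mulr0 addr0 mul0mx scaler0 addr0 mul_mx_scalar.
  apply/eqP => /matrixP /(_ 0 (Ordinal hM)); rewrite !mxE => /eqP.
  by rewrite oner_eq0.
exists (hadj u).
  rewrite mulmxDr mul_mx_scalar -scalemxAr !mulmxA.
  by rewrite [hadj u *m u]mx11_scalar mul_scalar_mx scalerDl scalerA.
apply: contra nz => /eqP /matrixP H; apply/eqP/matrixP => i j.
by move/eqP: (H j i); rewrite !mxE conjC_eq0 => /eqP ->.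
Qed.

Lemma rank1_lambda_max (lam : C) : (0 < M)%N -> is_lambda_max rank1 lam ->
  0 < lam /\ forall x, dot x (rank1 *m x) <= lam * dot x x.
Proof.
move=> hM [_ lam_max]; have hb := lam_max _ (rank1_eigenvalue hM).
split.
  apply: lt_le_trans hb; exact: ltr_wpDr (mulr_ge0 hk (dot_ge0 u)) hc.
move=> x; apply: le_trans (ler_wpM2r (dot_ge0 x) hb).
by rewrite rank1_form mulrDl lerD2l -mulrA ler_wpM2l ?cauchy_schwarz.
Qed.

End RankOneUpdate.

Lemma Ymat_rank1 (C : numClosedFieldType) (M Nt : nat) (P s : C)
    (R : 'M[C]_(M, Nt)) (f : 'cV[C]_Nt) :
  Ymat P s R f = rank1 (M%:R)^-1 (P / s) (R *m f).
Proof. by rewrite /Ymat /rank1 /hadj map_mxM trmx_mul !mulmxA. Qed.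

Section MMStep.
Variables (C : numClosedFieldType) (M : nat).
Variables (A B : 'M[C]_M) (lam : C).
Hypotheses (hermA : forall x y, dot (A *m x) y = dot x (A *m y))
           (hermB : forall x y, dot (B *m x) y = dot x (B *m y))
           (psdA : forall z, 0 <= dot z (A *m z))
           (boundB : forall z, dot z (B *m z) <= lam * dot z z)
           (lam_real : lam^* = lam).

Lemma mm_step_monotone (v v' : 'cV[C]_M) :
  0 < dot v (B *m v) -> 0 < dot v' (B *m v') -> dot v' v' = dot v v ->
  dot (wvec A B lam v) v + dot v (wvec A B lam v) <=
    dot (wvec A B lam v) v' + dot v' (wvec A B lam v) ->
  dot v (A *m v) / dot v (B *m v) <= dot v' (A *m v') / dot v' (B *m v').
Proof.
set a := dot v (A *m v); set b := dot v (B *m v); set b' := dot v' (B *m v').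
move=> b_gt0 b'_gt0 same_norm improved.
have term1 := psdA (v' - (b' / b) *: v).
have term2 := boundB (v' - v); rewrite -subr_ge0 in term2.
have term3 := improved; rewrite -subr_ge0 in term3.
have q_ge0 : 0 <= a / b ^+ 2 := divr_ge0 (psdA v) (exprn_ge0 2 (ltW b_gt0)).
have gap_ge0 := addr_ge0 (addr_ge0 (divr_ge0 term1 (ltW b'_gt0))
                                   (mulr_ge0 q_ge0 term2)) term3.
(* the gap a'/b' - a/b equals the nonnegative sum gap_ge0 *)
rewrite -subr_ge0; apply: le_trans gap_ge0 _; rewrite le_eqVlt; apply/orP; left.
apply/eqP; rewrite /wvec !qformE mulmxBl mul_scalar_mx.
rewrite !(mulmxBr, mulmxDr, mulmxN) -!scalemxAr.
rewrite !(dotBl, dotBr, dotDl, dotDr, dotNl, dotNr, dotZl, dotZr).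
rewrite lam_real (geC0_conj q_ge0) !geC0_conj ?invr_ge0 ?divr_ge0 ?ltW //.
rewrite !hermA !hermB same_norm /a /b /b'.
by field; rewrite !gt_eqF.
Qed.

End MMStep.

Theorem mainTheorem5 (C : numClosedFieldType) (M Nt : nat)
  (hM : (0 < M)%N) (hNt : (0 < Nt)%N)
  (P sl se : C) (hP : 0 <= P) (hsl : 0 < sl) (hse : 0 < se)
  (Rl Re : 'M[C]_(M, Nt)) (f : 'cV[C]_Nt)
  (lam : C) (hlam : is_lambda_max (Ymat P se Re f) lam)
  (v v' : 'cV[C]_M)
  (hv : forall i, `|v i 0| = 1)
  (hv' : forall i, `|v' i 0| = 1)
  (hupd : forall i,
     let w := wvec (Ymat P sl Rl f) (Ymat P se Re f) lam v in
     w i 0 != 0 -> v' i 0 = w i 0 / `|w i 0|) :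
  gratio (Ymat P sl Rl f) (Ymat P se Re f) v <=
  gratio (Ymat P sl Rl f) (Ymat P se Re f) v'.
Proof.
have hc : 0 < (M%:R : C)^-1 by rewrite invr_gt0 ltr0n.
have hkl : 0 <= P / sl := divr_ge0 hP (ltW hsl).
have hke : 0 <= P / se := divr_ge0 hP (ltW hse).
move: hlam hupd; rewrite /gratio !qformE !Ymat_rank1 => hlam hupd.
have [lam_gt0 boundYe] := rank1_lambda_max hc hke hM hlam.
(* on unimodular vectors the form of Y_e is at least (1/M) M = 1 > 0 *)
have Ye_form_gt0 (x : 'cV[C]_M) : (forall i, `|x i 0| = 1) ->
    0 < dot x (rank1 (M%:R)^-1 (P / se) (Re *m f) *m x).
  move=> hx; apply: lt_le_trans (rank1_form_ge _ _ hke x).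
  by rewrite dot_unimodular // mulVf ?ltr01 ?pnatr_eq0 -?lt0n.
apply: mm_step_monotone; rewrite ?Ye_form_gt0 ?dot_unimodular //.
- exact: rank1_hermitian.
- exact: rank1_hermitian.
- exact: rank1_psd.
- exact: geC0_conj (ltW lam_gt0).
- exact: phase_alignment hv hv' hupd.
Qed.
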